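(* Let $\mathcal A$ be an additive category and let $\mathcal J_1,\mathcal J_2$ be ideals of $\mathcal A$. If $\mathcal J_1$ and $\mathcal J_2$ are both preenveloping, then so is $\mathcal J_1+\mathcal J_2$. Likewise, if $\mathcal J_1$ and $\mathcal J_2$ are both precovering, then so is $\mathcal J_1+\mathcal J_2$.
   Context: An ideal $\mathcal J$ of an additive category $\mathcal A$ assigns to each pair of objects $(A,B)$ a subgroup $\mathcal J(A,B)\subseteq \mathrm{Hom}(A,B)$ such that $fgh\in\mathcal J$ whenever $g\in\mathcal J$ and $f,h$ are arbitrary composable morphisms. The sum $\mathcal J_1+\mathcal J_2$ is given by $(\mathcal J_1+\mathcal J_2)(A,B)=\mathcal J_1(A,B)+\mathcal J_2(A,B)$. An ideal $\mathcal J$ is preenveloping if for every object $B$ there is a morphism $j:B\to J$ in $\mathcal J$ such that every morphism $j':B\to J'$ in $\mathcal J$ factors as $j'=gj$ for some $g:J\to J'$ (such $j$ is a $\mathcal J$-preenvelope). Dually, $\mathcal I$ is precovering if every object $A$ admits $i:I\to A$ in $\mathcal I$ through which every morphism $I'\to A$ in $\mathcal I$ factors. *)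

From HB Require Import structures.
From mathcomp Require Import all_boot all_order all_algebra.
Set Implicit Arguments. Unset Strict Implicit. Unset Printing Implicit Defensive.
Import GRing.Theory.
Local Open Scope ring_scope.

Record addCat := AddCat {
  Obj : Type;
  Hom : Obj -> Obj -> zmodType;
  comp : forall A B C : Obj, Hom B C -> Hom A B -> Hom A C;
  idm : forall A : Obj, Hom A A;
  compA : forall (A B C D : Obj) (f : Hom C D) (g : Hom B C) (h : Hom A B),
      comp f (comp g h) = comp (comp f g) h;
  comp1l : forall (A B : Obj) (f : Hom A B), comp (idm B) f = f;
  comp1r : forall (A B : Obj) (f : Hom A B), comp f (idm A) = f;
  compDl : forall (A B C : Obj) (f g : Hom B C) (h : Hom A B),
      comp (f + g) h = comp f h + comp g h;
  compDr : forall (A B C : Obj) (f : Hom B C) (g h : Hom A B),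
      comp f (g + h) = comp f g + comp f h;
  zobj : Obj;
  zobj_initial : forall (A : Obj) (f g : Hom zobj A), f = g;
  zobj_terminal : forall (A : Obj) (f g : Hom A zobj), f = g;
  biprod : Obj -> Obj -> Obj;
  bi_in1 : forall A B : Obj, Hom A (biprod A B);
  bi_in2 : forall A B : Obj, Hom B (biprod A B);
  bi_pr1 : forall A B : Obj, Hom (biprod A B) A;
  bi_pr2 : forall A B : Obj, Hom (biprod A B) B;
  bi_pr1in1 : forall A B : Obj, comp (bi_pr1 A B) (bi_in1 A B) = idm A;
  bi_pr2in2 : forall A B : Obj, comp (bi_pr2 A B) (bi_in2 A B) = idm B;
  bi_pr1in2 : forall A B : Obj, comp (bi_pr1 A B) (bi_in2 A B) = 0;
  bi_pr2in1 : forall A B : Obj, comp (bi_pr2 A B) (bi_in1 A B) = 0;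
  bi_sum : forall A B : Obj,
      comp (bi_in1 A B) (bi_pr1 A B) + comp (bi_in2 A B) (bi_pr2 A B)
      = idm (biprod A B)
}.

Arguments comp {a A B C} _ _.
Arguments idm {a} A.

Definition morclass (C : addCat) := forall A B : Obj C, Hom A B -> Prop.

Definition is_ideal (C : addCat) (J : morclass C) : Prop :=
  (forall A B : Obj C, J A B 0) /\
  (forall (A B : Obj C) (f g : Hom A B), J A B f -> J A B g -> J A B (f - g)) /\
  (forall (A B B' A' : Obj C) (f : Hom B' A') (g : Hom B B') (h : Hom A B),
      J B B' g -> J A A' (comp f (comp g h))).

Definition ideal_sum (C : addCat) (J1 J2 : morclass C) : morclass C :=
  fun A B f => exists g1 g2, J1 A B g1 /\ J2 A B g2 /\ f = g1 + g2.

Definition preenvelope (C : addCat) (J : morclass C) (B E : Obj C)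
  (j : Hom B E) : Prop :=
  J B E j /\ forall (E' : Obj C) (j' : Hom B E'), J B E' j' ->
    exists g : Hom E E', j' = comp g j.

Definition preenveloping (C : addCat) (J : morclass C) : Prop :=
  forall B : Obj C, exists (E : Obj C) (j : Hom B E), preenvelope J j.

Definition precover (C : addCat) (J : morclass C) (I A : Obj C)
  (i : Hom I A) : Prop :=
  J I A i /\ forall (I' : Obj C) (i' : Hom I' A), J I' A i' ->
    exists g : Hom I' I, i' = comp i g.

Definition precovering (C : addCat) (J : morclass C) : Prop :=
  forall A : Obj C, exists (I : Obj C) (i : Hom I A), precover J i.

(* If j1 : B -> E1 and j2 : B -> E2 are preenvelopes for J1 and J2, then
   j := in1 j1 + in2 j2 : B -> E1 (+) E2 lies in J1 + J2, and any g1 + g2 in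
   J1 + J2 with g1 = h1 j1 and g2 = h2 j2 factors as (h1 pr1 + h2 pr2) j.
   Precovers are dual, combined through pr1 and pr2. *)
From Pilot Require Import Defs.
From mathcomp Require Import all_boot all_order all_algebra.
Import GRing.Theory.
Local Open Scope ring_scope.

Section AdditiveCategory.
Variable C : addCat.

Local Notation Hom := (@Defs.Hom C).
Local Notation "f \oc g" := (Defs.comp f g) (at level 40, left associativity).

Lemma comp0r (A B D : Obj C) (f : Hom B D) : f \oc (0 : Hom A B) = 0.
Proof. by apply: (@addrI _ (f \oc 0)); rewrite -compDr !addr0. Qed.

Lemma comp0l (A B D : Obj C) (f : Hom A B) : (0 : Hom B D) \oc f = 0.
Proof. by apply: (@addrI _ (0 \oc f)); rewrite -compDl !addr0. Qed.

Lemma biprod_copair_pair (B E1 E2 D : Obj C)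
    (f1 : Hom B E1) (f2 : Hom B E2) (h1 : Hom E1 D) (h2 : Hom E2 D) :
  (h1 \oc bi_pr1 E1 E2 + h2 \oc bi_pr2 E1 E2) \oc
    (bi_in1 E1 E2 \oc f1 + bi_in2 E1 E2 \oc f2) = h1 \oc f1 + h2 \oc f2.
Proof.
rewrite compDl !compDr -!Defs.compA.
rewrite !(Defs.compA (bi_pr1 E1 E2)) !(Defs.compA (bi_pr2 E1 E2)).
by rewrite bi_pr1in1 bi_pr1in2 bi_pr2in1 bi_pr2in2 !comp0l !comp0r !comp1l addr0 add0r.
Qed.

Definition postcomp_closed (J : morclass C) : Prop :=
  forall (A B D : Obj C) (f : Hom B D) (g : Hom A B), J A B g -> J A D (f \oc g).

Definition precomp_closed (J : morclass C) : Prop :=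
  forall (A B D : Obj C) (g : Hom B D) (h : Hom A B), J B D g -> J A D (g \oc h).

Lemma ideal_postcomp_closed (J : morclass C) : is_ideal J -> postcomp_closed J.
Proof.
move=> [_ [_ J_comp]] A B D f g Jg; have := J_comp A A B D f g (idm A) Jg.
by rewrite comp1r.
Qed.

Lemma ideal_precomp_closed (J : morclass C) : is_ideal J -> precomp_closed J.
Proof.
move=> [_ [_ J_comp]] A B D g h Jg; have := J_comp A B D D (idm D) g h Jg.
by rewrite comp1l.
Qed.

Lemma ideal_sumD (J1 J2 : morclass C) (A B : Obj C) (g1 g2 : Hom A B) :
  J1 A B g1 -> J2 A B g2 -> ideal_sum J1 J2 (g1 + g2).
Proof. by move=> J1g1 J2g2; exists g1, g2. Qed.

Lemma preenvelope_sum (J1 J2 : morclass C) (B E1 E2 : Obj C)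
    (j1 : Hom B E1) (j2 : Hom B E2) :
  postcomp_closed J1 -> postcomp_closed J2 ->
  preenvelope J1 j1 -> preenvelope J2 j2 ->
  preenvelope (ideal_sum J1 J2) (bi_in1 E1 E2 \oc j1 + bi_in2 E1 E2 \oc j2).
Proof.
move=> cl1 cl2 [J1j1 fact1] [J2j2 fact2]; split.
  by apply: ideal_sumD; [apply: cl1 | apply: cl2].
move=> E' _ [g1 [g2 [J1g1 [J2g2 ->]]]].
have [h1 ->] := fact1 _ _ J1g1; have [h2 ->] := fact2 _ _ J2g2.
by exists (h1 \oc bi_pr1 E1 E2 + h2 \oc bi_pr2 E1 E2); rewrite biprod_copair_pair.
Qed.

Lemma precover_sum (J1 J2 : morclass C) (A I1 I2 : Obj C)
    (i1 : Hom I1 A) (i2 : Hom I2 A) :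
  precomp_closed J1 -> precomp_closed J2 ->
  precover J1 i1 -> precover J2 i2 ->
  precover (ideal_sum J1 J2) (i1 \oc bi_pr1 I1 I2 + i2 \oc bi_pr2 I1 I2).
Proof.
move=> cl1 cl2 [J1i1 fact1] [J2i2 fact2]; split.
  by apply: ideal_sumD; [apply: cl1 | apply: cl2].
move=> I' _ [g1 [g2 [J1g1 [J2g2 ->]]]].
have [h1 ->] := fact1 _ _ J1g1; have [h2 ->] := fact2 _ _ J2g2.
by exists (bi_in1 I1 I2 \oc h1 + bi_in2 I1 I2 \oc h2); rewrite biprod_copair_pair.
Qed.

End AdditiveCategory.

Theorem proposition2p1 (C : addCat) (J1 J2 : morclass C) :
  is_ideal J1 -> is_ideal J2 ->
  (preenveloping J1 -> preenveloping J2 -> preenveloping (ideal_sum J1 J2)) /\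
  (precovering J1 -> precovering J2 -> precovering (ideal_sum J1 J2)).
Proof.
move=> idl1 idl2; split=> [env1 env2 B | cov1 cov2 A].
- have [E1 [j1 env_j1]] := env1 B; have [E2 [j2 env_j2]] := env2 B.
  do 2 eexists.
  by apply: preenvelope_sum env_j1 env_j2; apply: ideal_postcomp_closed.
- have [I1 [i1 cov_i1]] := cov1 A; have [I2 [i2 cov_i2]] := cov2 A.
  do 2 eexists.
  by apply: precover_sum cov_i1 cov_i2; apply: ideal_precomp_closed.
Qed.
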